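(* Let $h,k\ge0$ be integers. For every digraph $G$ there is a partition of $V(G)$ into three sets $P,Q,R$ (possibly empty) such that $G[P]$ is $(h,k)$-out-orderable, $G[Q]$ is $(h,k)$-in-orderable, and $G[R]$ is $(h,k)$-robust.
   Context: Digraphs are finite, with no loops, parallel edges or antiparallel pairs; $\chi(X)$ denotes the chromatic number of the underlying undirected graph of $G[X]$. A digraph $G$ is $(h,k)$-out-orderable if there is a partition $X_1,\dots,X_n$ of $V(G)$ such that for each $i$, $\chi(X_i)\le h$ and each vertex of $X_i$ has at most $k-1$ out-neighbours in $X_{i+1}\cup\dots\cup X_n$; $(h,k)$-in-orderable is defined identically with in-neighbours in place of out-neighbours. A digraph $G$ is $(h,k)$-robust if for every nonempty $Z\subseteq V(G)$ with $\chi(Z)\le h$, some vertex of $Z$ has at least $k$ out-neighbours in $V(G)\setminus Z$ and at least $k$ in-neighbours in $V(G)\setminus Z$. *)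

From mathcomp Require Import all_boot.
Set Implicit Arguments. Unset Strict Implicit. Unset Printing Implicit Defensive.

(* A digraph is a finite vertex type T with an arc relation E : rel T
   (E x y = there is an arc x -> y).  Being a relation, there are no
   parallel arcs; loops and antiparallel pairs are excluded by hypotheses
   in the theorem. *)

Definition chi_le (T : finType) (E : rel T) (X : {set T}) (h : nat) : Prop :=
  exists c : T -> nat,
    (forall x, x \in X -> c x < h) /\
    (forall x y, x \in X -> y \in X -> (E x y || E y x) -> c x != c y).

(* G[S] is (h,k)-out-orderable: there is a partition X_0,...,X_{n-1} of S
   into nonempty parts with chi(X_i) <= h and every vertex of X_i having at
   most k-1 out-neighbours in X_{i+1} u ... u X_{n-1}
   (written  #|...| + 1 <= k  so that k = 0 is handled literally). *)
Definition out_orderable (T : finType) (E : rel T) (h k : nat) (S : {set T})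
  : Prop :=
  exists (n : nat) (X : 'I_n -> {set T}),
    [/\ (forall i, X i != set0),
        (forall i j, i != j -> [disjoint X i & X j]),
        \bigcup_(i < n) X i = S,
        (forall i, chi_le E (X i) h) &
        (forall i v, v \in X i ->
           #|[set w | E v w & w \in \bigcup_(j < n | i < j) X j]| + 1 <= k)].

Definition in_orderable (T : finType) (E : rel T) (h k : nat) (S : {set T})
  : Prop :=
  exists (n : nat) (X : 'I_n -> {set T}),
    [/\ (forall i, X i != set0),
        (forall i j, i != j -> [disjoint X i & X j]),
        \bigcup_(i < n) X i = S,
        (forall i, chi_le E (X i) h) &
        (forall i v, v \in X i ->
           #|[set w | E w v & w \in \bigcup_(j < n | i < j) X j]| + 1 <= k)].

Definition robust (T : finType) (E : rel T) (h k : nat) (S : {set T}) : Prop :=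
  forall Z : {set T}, Z \subset S -> Z != set0 -> chi_le E Z h ->
    exists2 v, v \in Z &
      k <= #|[set w | E v w & w \in S :\: Z]| /\
      k <= #|[set w | E w v & w \in S :\: Z]|.

From mathcomp Require Import all_boot.
From Stdlib Require Import Classical.
Set Implicit Arguments. Unset Strict Implicit. Unset Printing Implicit Defensive.

(* If S is not robust, some Z inside S of chromatic number at most h has
   every vertex with fewer than k out-neighbours or fewer than k in-neighbours
   in S \ Z.  Decompose S \ Z by induction; the vertices of Z of the first
   kind form a new first part of the out-ordering, the others a new first part
   of the in-ordering, and the robust part is unchanged. *)

Section Decomposition.

Variables (T : finType) (E : rel T) (h k : nat).

Lemma disjointsU (A B C : {set T}) :
  [disjoint A :|: B & C] = [disjoint A & C] && [disjoint B & C].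
Proof. by rewrite -!setI_eq0 setIUl setU_eq0. Qed.

Lemma disjoint_setD (A B : {set T}) : [disjoint A & B :\: A].
Proof. by rewrite disjoints_subset setDE setCI setCK subsetUr. Qed.

Lemma setU_setD (A B : {set T}) : A \subset B -> A :|: B :\: A = B.
Proof. by move=> sAB; rewrite setDE setUIr setUCr setIT (setUidPr sAB). Qed.

Lemma card_nbr_subset (F : rel T) v (A B : {set T}) : A \subset B ->
  #|[set w | F v w & w \in A]| <= #|[set w | F v w & w \in B]|.
Proof.
move=> /subsetP sAB; apply/subset_leq_card/subsetP => w.
by rewrite !inE => /andP[-> /sAB].
Qed.

(* [F v w] means "w is a neighbour of v" in the sense the ordering counts:
   out-orderable is [orderable E], in-orderable is [orderable (fun v w => E w v)]. *)
Definition orderable (F : rel T) (S : {set T}) : Prop :=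
  exists (n : nat) (X : 'I_n -> {set T}),
    [/\ (forall i, X i != set0),
        (forall i j, i != j -> [disjoint X i & X j]),
        \bigcup_(i < n) X i = S,
        (forall i, chi_le E (X i) h) &
        (forall i v, v \in X i ->
           #|[set w | F v w & w \in \bigcup_(j < n | i < j) X j]| + 1 <= k)].

Lemma chi_le_subset (A B : {set T}) : A \subset B -> chi_le E B h -> chi_le E A h.
Proof.
move=> /subsetP sAB [c [c_lt c_proper]]; exists c; split=> [x xA | x y xA yA].
  exact: c_lt (sAB x xA).
exact: c_proper (sAB x xA) (sAB y yA).
Qed.

Lemma orderable0 (F : rel T) : orderable F set0.
Proof.
exists 0, (fun=> set0); split=> //; try by case.
by rewrite big_ord0.
Qed.

Definition prepend_part n (A : {set T}) (X : 'I_n -> {set T}) (i : 'I_n.+1) :=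
  if unlift ord0 i is Some j then X j else A.

Lemma prepend_part0 n A (X : 'I_n -> {set T}) : prepend_part A X ord0 = A.
Proof. by rewrite /prepend_part unlift_none. Qed.

Lemma prepend_part_lift n A (X : 'I_n -> {set T}) j :
  prepend_part A X (lift ord0 j) = X j.
Proof. by rewrite /prepend_part liftK. Qed.

Lemma bigcup_prepend_part n A (X : 'I_n -> {set T}) (P : pred nat) :
  \bigcup_(j < n.+1 | P j) prepend_part A X j
    = (if P 0 then A else set0) :|: \bigcup_(j < n | P j.+1) X j.
Proof.
rewrite big_mkcond big_ord_recl prepend_part0 [in RHS]big_mkcond.
by congr (_ :|: _); apply: eq_bigr => j _; rewrite prepend_part_lift lift0.
Qed.

Lemma orderable_setU (F : rel T) (A S : {set T}) :
  orderable F S -> [disjoint A & S] -> chi_le E A h ->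
  (forall v, v \in A -> #|[set w | F v w & w \in S]| < k) ->
  orderable F (A :|: S).
Proof.
move=> [n [X [X_ne X_dis X_cup X_chi X_deg]]] dAS chiA degA.
have [-> | A_ne] := eqVneq A set0; first by rewrite set0U; exists n, X.
have X_sub j : X j \subset S by rewrite -X_cup (bigcup_max j).
exists n.+1, (prepend_part A X); split.
- by move=> i; case: (unliftP ord0 i) => [j ->|->];
    rewrite ?prepend_part_lift ?prepend_part0.
- move=> i j; case: (unliftP ord0 i) => [i' ->|->];
    case: (unliftP ord0 j) => [j' ->|->];
    rewrite ?prepend_part_lift ?prepend_part0 ?eqxx //.
  + by move=> ne; apply: X_dis; apply: contra ne => /eqP ->.
  + by move=> _; rewrite disjoint_sym (disjointWr (X_sub i')).
  + by move=> _; rewrite (disjointWr (X_sub j')).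
- by rewrite (bigcup_prepend_part _ _ xpredT) X_cup.
- by move=> i; case: (unliftP ord0 i) => [j ->|->];
    rewrite ?prepend_part_lift ?prepend_part0.
- move=> i v; case: (unliftP ord0 i) => [i' ->|->];
    rewrite ?prepend_part_lift ?prepend_part0 => vX.
  + rewrite lift0 (bigcup_prepend_part _ _ (fun j => i'.+1 < j)) set0U.
    exact: X_deg.
  + by rewrite (bigcup_prepend_part _ _ (fun j => 0 < j)) ltnn set0U X_cup addn1 degA.
Qed.

Definition out_in_robust_partition (S P Q R : {set T}) : Prop :=
  [/\ [&& [disjoint P & Q], [disjoint P & R] & [disjoint Q & R]],
      P :|: Q :|: R = S,
      orderable E P,
      orderable (fun v w => E w v) Q &
      robust E h k R].

Lemma out_in_robust_partition_robust (S : {set T}) :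
  robust E h k S -> out_in_robust_partition S set0 set0 S.
Proof.
move=> Srob; split; rewrite ?disjoints_subset ?sub0set ?set0U //;
exact: orderable0.
Qed.

Lemma not_robustP (S : {set T}) :
  ~ robust E h k S ->
  exists Z : {set T}, [/\ Z \subset S, Z != set0, chi_le E Z h &
    forall v, v \in Z ->
      #|[set w | E v w & w \in S :\: Z]| < k \/
      #|[set w | E w v & w \in S :\: Z]| < k].
Proof.
move=> Snrob; apply: NNPP => noZ; apply: Snrob => Z ZS Z_ne Zchi.
apply: NNPP => noV; apply: noZ; exists Z; split=> // v vZ.
rewrite !ltnNge; apply/orP; rewrite -negb_and; apply/negP => deg.
by apply: noV; exists v => //; apply/andP.
Qed.

Lemma out_in_robust_partition_peel (S Z P Q R : {set T}) :
  Z \subset S -> chi_le E Z h ->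
  (forall v, v \in Z ->
     #|[set w | E v w & w \in S :\: Z]| < k \/
     #|[set w | E w v & w \in S :\: Z]| < k) ->
  out_in_robust_partition (S :\: Z) P Q R ->
  let W := [set v | #|[set w | E v w & w \in S :\: Z]| < k] in
  out_in_robust_partition S (Z :&: W :|: P) (Z :\: W :|: Q) R.
Proof.
move=> ZS Zchi Zdeg [dis U Pord Qord Rrob] W.
have [dPQ dPR dQR] := and3P dis.
have in_rest (X : {set T}) : X \subset P :|: Q :|: R -> X \subset S :\: Z by rewrite U.
have PS : P \subset S :\: Z by apply/in_rest; rewrite -setUA subsetUl.
have QS : Q \subset S :\: Z by apply/in_rest; rewrite setUAC subsetUr.
have RS : R \subset S :\: Z by apply/in_rest; rewrite subsetUr.
have sep_Z (X Y : {set T}) : X \subset Z -> Y \subset S :\: Z -> [disjoint X & Y].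
  by move=> sX sY; exact: disjointW sX sY (disjoint_setD Z S).
have ZWZ : Z :&: W \subset Z := subsetIl _ _.
have ZDZ : Z :\: W \subset Z := subsetDl _ _.
split.
- rewrite !disjointsU ![[disjoint _ & _ :|: _]]disjoint_sym !disjointsU.
  have -> : [disjoint Z :\: W & Z :&: W].
    rewrite disjoint_sym disjoints_subset setDE setCI setCK.
    exact: subset_trans (subsetIr _ _) (subsetUr _ _).
  by rewrite (disjoint_sym Q (Z :&: W)) (disjoint_sym Q P) dPQ dPR dQR !sep_Z.
- by rewrite setUACA -setUA U setID setU_setD.
- apply: orderable_setU => //; first exact: sep_Z.
  + exact: chi_le_subset Zchi.
  + move=> v; rewrite !inE => /andP[_ vW].
    exact: leq_ltn_trans (card_nbr_subset _ _ PS) vW.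
- apply: orderable_setU => //; first exact: sep_Z.
  + exact: chi_le_subset Zchi.
  + move=> v; rewrite !inE => /andP[vW vZ].
    have [vW' | vin] := Zdeg v vZ; first by rewrite vW' in vW.
    exact: leq_ltn_trans (@card_nbr_subset (fun x y => E y x) v _ _ QS) vin.
- exact: Rrob.
Qed.

Lemma out_in_robust_partition_exists (S : {set T}) :
  exists P Q R, out_in_robust_partition S P Q R.
Proof.
have [n] : exists n, #|S| < n by exists #|S|.+1.
elim: n S => // n IH S Sn.
have [Srob | Snrob] := classic (robust E h k S).
  by exists set0, set0, S; apply: out_in_robust_partition_robust.
have [Z [ZS Z_ne Zchi Zdeg]] := not_robustP Snrob.
have Z_gt0 : 0 < #|Z| by rewrite card_gt0.
have SZn : #|S :\: Z| < n.
  rewrite -ltnS (leq_trans _ Sn) // ltnS cardsDS // ltn_subrL Z_gt0.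
  exact: leq_trans Z_gt0 (subset_leq_card ZS).
have [P [Q [R part]]] := IH _ SZn.
by eexists _, _, R; apply: out_in_robust_partition_peel part.
Qed.

End Decomposition.

Theorem theorem3p5 (h k : nat) (T : finType) (E : rel T) :
  irreflexive E ->
  (forall x y, E x y -> ~~ E y x) ->
  exists P Q R : {set T},
    [/\ [&& [disjoint P & Q], [disjoint P & R] & [disjoint Q & R]],
        P :|: Q :|: R = [set: T],
        out_orderable E h k P,
        in_orderable E h k Q &
        robust E h k R].
Proof.
move=> _ _.
have [P [Q [R]]] := out_in_robust_partition_exists E h k [set: T].
by exists P, Q, R.
Qed.
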